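(* Let $\Bbbk$ be a field of characteristic zero and $h,c\in\Bbbk$. Regarded as a module over the subalgebra $\mathcal O=\mathrm{span}\{L_n-L_{-n}\mid n\geq 1\}$ of the Virasoro algebra, the Verma module $V(h,c)$ is a free $U(\mathcal O)$-module of rank $1$; that is, $V(h,c)\cong U(\mathcal O)$ as $\mathcal O$-modules.
   Context: The Virasoro algebra $\mathrm{Vir}$ over $\Bbbk$ has basis $\{L_n\mid n\in\mathbb{Z}\}\cup\{C\}$ with $C$ central and $[L_n,L_m]=(n-m)L_{n+m}+\frac1{12}n(n^2-1)\delta_{m,-n}C$. Let $\mathrm{Vir}_+=\mathrm{span}\{L_n\mid n>0\}$, $\mathrm{Vir}_0=\Bbbk L_0\oplus\Bbbk C$. The Verma module is $V(h,c)=\mathrm{Ind}_{\mathrm{Vir}_0\oplus\mathrm{Vir}_+}^{\mathrm{Vir}}\Bbbk|h,c\rangle$, where $L_0$ acts on $|h,c\rangle$ by $h$, $C$ by $c$, and $\mathrm{Vir}_+$ by $0$. *)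

From HB Require Import structures.
From mathcomp Require Import all_boot all_order all_algebra.
Set Implicit Arguments. Unset Strict Implicit. Unset Printing Implicit Defensive.
Import Order.TTheory GRing.Theory Num.Theory.
Local Open Scope ring_scope.

Definition is_klinear (k : fieldType) (U W : lmodType k) (f : U -> W) : Prop :=
  forall (a : k) (x y : U), f (a *: x + y) = a *: f x + f y.

Definition is_vir_action (k : fieldType) (V : lmodType k)
    (L : int -> V -> V) (C : V -> V) : Prop :=
  [/\ forall n, is_klinear (L n),
      is_klinear C,
      forall (n m : int) (x : V),
        L n (L m x) - L m (L n x)
        = (n - m)%:~R *: L (n + m) x
          + (if m == - n then (n * (n ^+ 2 - 1))%:~R / 12%:R else 0) *: C x
    & forall (n : int) (x : V), C (L n x) = L n (C x)].

Definition is_hw_vector (k : fieldType) (V : lmodType k)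
    (L : int -> V -> V) (C : V -> V) (h c : k) (v : V) : Prop :=
  [/\ L 0 v = h *: v, C v = c *: v & forall n : int, 0 < n -> L n v = 0].

(* (V, L, C, v) is the Verma module V(h,c) = Ind_{Vir_0 + Vir_+}^{Vir} k|h,c>
   with v = |h,c>, characterized by its defining universal property:
   Hom_Vir(V(h,c), M) = {highest weight vectors of weight (h,c) in M}. *)
Definition is_verma (k : fieldType) (h c : k) (V : lmodType k)
    (L : int -> V -> V) (C : V -> V) (v : V) : Prop :=
  [/\ is_vir_action L C,
      is_hw_vector L C h c v &
      forall (M : lmodType k) (LM : int -> M -> M) (CM : M -> M) (w : M),
        is_vir_action LM CM -> is_hw_vector LM CM h c w ->
        exists! f : V -> M,
          [/\ is_klinear f, f v = w,
              forall n x, f (L n x) = LM n (f x)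
            & forall x, f (C x) = CM (f x)]].

(* An action of the Lie algebra O = span{ L_n - L_{-n} | n >= 1 } on M:
   e n is the action of L_n - L_{-n} (so e 0 = 0, e (-n) = - e n), and
   [e_n, e_m] = (n-m) e_{n+m} - (n+m) e_{n-m} (the bracket of O). *)
Definition is_O_action (k : fieldType) (M : lmodType k) (e : int -> M -> M) : Prop :=
  [/\ forall n, is_klinear (e n),
      forall x, e 0 x = 0,
      forall n x, e (- n) x = - e n x
    & forall (n m : int) (x : M),
        e n (e m x) - e m (e n x)
        = (n - m)%:~R *: e (n + m) x - (n + m)%:~R *: e (n - m) x].

Definition restrict_O (k : fieldType) (V : lmodType k) (L : int -> V -> V)
  : int -> V -> V := fun n x => L n x - L (- n) x.

(* Stated via the universal property defining U(O) as the free
   O-module on one generator: there is g in V such that for every O-module M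
   and m in M there is a unique O-module map V -> M sending g to m. *)
Definition free_rank1_O (k : fieldType) (V : lmodType k) (e : int -> V -> V) : Prop :=
  exists g : V,
    forall (M : lmodType k) (eM : int -> M -> M) (m : M),
      is_O_action eM ->
      exists! f : V -> M,
        [/\ is_klinear f, f g = m & forall n x, f (e n x) = eM n (f x)].

(* Since Vir = O + b as vector spaces, with b = Vir_0 + Vir_+ (for n > 0,
   L_{-n} = L_n - (L_n - L_{-n})), PBW would give V(h,c) = U(Vir) (x)_{U(b)} k
   = U(O). We argue with universal properties instead. For an O-module M, the
   coinduced Vir-module Hom_{U(O)}(U(Vir), M) is modelled by the functions on
   words in the letters L_n, C that respect the bracket relations and are
   O-linear. Normal ordering (rewriting each letter as an element of O plus one
   of b, and moving the latter to the right end, where it acts by its weight)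
   defines a highest weight vector of weight (h,c) in it with any prescribed
   value m at the empty word, and such a vector is unique. The universal
   property of V(h,c) gives a Vir-map from V(h,c) to the coinduced module;
   evaluation at the empty word is then the O-map sending v to m, and every
   O-map arises this way by Frobenius reciprocity. *)

From HB Require Import structures.
From mathcomp Require Import all_boot all_order all_algebra.
From mathcomp Require Import ring zify.
From mathcomp Require Import boolp functions.
Set Implicit Arguments. Unset Strict Implicit. Unset Printing Implicit Defensive.
Import Order.TTheory GRing.Theory Num.Theory.
Local Open Scope ring_scope.

Section KLinear.
Variables (k : fieldType) (U W : lmodType k) (f : U -> W).
Hypothesis f_lin : is_klinear f.

Lemma klinearD x y : f (x + y) = f x + f y.
Proof. by have := f_lin 1 x y; rewrite !scale1r. Qed.

Lemma klinear0 : f 0 = 0.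
Proof. by apply: (@addrI _ (f 0)); rewrite -klinearD !addr0. Qed.

Lemma klinearZ a x : f (a *: x) = a *: f x.
Proof. by rewrite -[a *: x]addr0 f_lin klinear0 addr0. Qed.

Lemma klinearN x : f (- x) = - f x.
Proof. by rewrite -scaleN1r klinearZ scaleN1r. Qed.

Lemma klinearB x y : f (x - y) = f x - f y.
Proof. by rewrite klinearD klinearN. Qed.

End KLinear.

Lemma klinear_comp (k : fieldType) (U V W : lmodType k) (f : V -> W) (g : U -> V) :
  is_klinear f -> is_klinear g -> is_klinear (fun x => f (g x)).
Proof. by move=> f_lin g_lin a x y; rewrite g_lin f_lin. Qed.

Lemma scale_klinear (k : fieldType) (W : lmodType k) (a : k) :
  is_klinear (fun x : W => a *: x).
Proof. by move=> b x y; rewrite scalerDr !scalerA mulrC. Qed.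

Lemma subrACA (W : zmodType) (a b c d : W) : (a + b) - (c + d) = (a - c) + (b - d).
Proof. by rewrite opprD addrACA. Qed.

Lemma subrACA3 (V : zmodType) (a1 b1 s1 a2 b2 s2 : V) :
  (a1 - b1 - s1) - (a2 - b2 - s2) = (a1 - a2) - (b1 - b2) - (s1 - s2).
Proof.
by rewrite subrACA [X in X + _]subrACA !opprB !opprK [- b1 + _]addrC [- s1 + _]addrC.
Qed.

(* A word [:: g_1; ...; g_k] of letters stands for the monomial g_1 ... g_k of
   U(Vir), the letter [Some n] for L_n and [None] for C. *)
Notation letter := (option int).

Section Bracket.
Variable k : fieldType.

Definition vir_cocycle (n m : int) : k :=
  if m == - n then (n * (n ^+ 2 - 1))%:~R / 12%:R else 0.

(* [vir_br x y f] is [f], extended linearly to Vir, evaluated at [[x, y]]. *)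
Definition vir_br (W : lmodType k) (x y : letter) (f : letter -> W) : W :=
  match x, y with
  | Some n, Some m => (n - m)%:~R *: f (Some (n + m)) + vir_cocycle n m *: f None
  | _, _ => 0
  end.

Variable W : lmodType k.
Implicit Types (f g : letter -> W) (x y z : letter).

Lemma vir_br_ext x y f g : (forall z, f z = g z) -> vir_br x y f = vir_br x y g.
Proof. by case: x => [n|]; case: y => [m|] //= fg; rewrite !fg. Qed.

Lemma vir_br_klinear (U : lmodType k) (phi : U -> W) x y (f : letter -> U) :
  is_klinear phi -> vir_br x y (fun z => phi (f z)) = phi (vir_br x y f).
Proof.
move=> phi_lin; case: x => [n|]; case: y => [m|] /=; rewrite ?(klinear0 phi_lin) //.
by rewrite (klinearD phi_lin) !(klinearZ phi_lin).
Qed.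

Lemma vir_brD x y f g : vir_br x y (fun z => f z + g z) = vir_br x y f + vir_br x y g.
Proof.
by case: x => [n|]; case: y => [m|] /=; rewrite ?addr0 // !scalerDr addrACA.
Qed.

Lemma vir_brZ x y a f : vir_br x y (fun z => a *: f z) = a *: vir_br x y f.
Proof. exact/vir_br_klinear/scale_klinear. Qed.

Lemma vir_brN x y f : vir_br x y (fun z => - f z) = - vir_br x y f.
Proof. by rewrite -scaleN1r -vir_brZ; apply: vir_br_ext => z; rewrite scaleN1r. Qed.

Lemma vir_brB x y f g : vir_br x y (fun z => f z - g z) = vir_br x y f - vir_br x y g.
Proof. by rewrite vir_brD vir_brN. Qed.

Lemma vir_br0 x y : vir_br x y (fun=> 0 : W) = 0.
Proof. by case: x => [n|]; case: y => [m|] //=; rewrite !scaler0 addr0. Qed.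

Lemma vir_cocycleC n m : vir_cocycle m n = - vir_cocycle n m.
Proof.
rewrite /vir_cocycle; have -> : (n == - m) = (m == - n) by apply/eqP/eqP; lia.
case: eqP => [->|_]; last by rewrite oppr0.
by rewrite sqrrN mulNr intrN mulNr.
Qed.

Lemma vir_cocycleNN n m : vir_cocycle (- n) (- m) = - vir_cocycle n m.
Proof.
rewrite /vir_cocycle; have -> : (- m == - - n) = (m == - n) by rewrite eqr_opp.
by case: eqP => _; rewrite ?oppr0 // sqrrN mulNr intrN mulNr.
Qed.

Lemma vir_br_addNN n m f :
  vir_br (Some n) (Some m) f + vir_br (Some (- n)) (Some (- m)) f
  = (n - m)%:~R *: (f (Some (n + m)) - f (Some (- (n + m)))).
Proof.
rewrite /=; have -> : - n - - m = - (n - m) by rewrite opprD.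
by rewrite -opprD vir_cocycleNN intrN !scaleNr addrACA subrr addr0 -scalerBr.
Qed.

Lemma vir_brC x y f : vir_br y x f = - vir_br x y f.
Proof.
case: x => [n|]; case: y => [m|] /=; rewrite ?oppr0 //.
by rewrite vir_cocycleC (addrC m n) opprD -!scaleNr -intrN opprB.
Qed.

Lemma vir_br_jacobi x y z f :
  vir_br x y (fun t => vir_br t z f) - vir_br x z (fun t => vir_br t y f)
  = vir_br y z (fun t => vir_br x t f).
Proof.
case: x => [p|]; last by rewrite /= subrr vir_br0.
case: y => [q|]; case: z => [r|]; rewrite /= ?scaler0 ?addr0 ?subrr ?subr0 //.
rewrite !scalerDr !scalerA [p + r + q]addrAC [p + (q + r)]addrA.
rewrite subrACA -!scalerBl; congr (_ *: _ + _ *: _).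
  by rewrite -!intrM -intrB; congr (_%:~R); ring.
rewrite /vir_cocycle.
have -> : (r == - (p + q)) = (p + q + r == 0) by apply/eqP/eqP; lia.
have -> : (q == - (p + r)) = (p + q + r == 0) by apply/eqP/eqP; lia.
have -> : (q + r == - p) = (p + q + r == 0) by apply/eqP/eqP; lia.
case: eqP => [pqr0|_]; last by rewrite !mulr0 subr0.
have -> : r = - (p + q) by lia.
rewrite !mulrA -mulrBl; congr (_ / _).
by rewrite -!intrM -intrB; congr (_%:~R); ring.
Qed.

Lemma vir_br_leibniz x y z f :
  vir_br x z (fun t => vir_br y t f) - vir_br y z (fun t => vir_br x t f)
  = vir_br y x (fun t => vir_br t z f).
Proof.
have swap u v : vir_br u z (fun t => vir_br v t f) = vir_br z u (fun t => vir_br t v f).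
  by rewrite vir_brC -vir_brN; apply: vir_br_ext => t; rewrite vir_brC opprK.
rewrite !swap vir_br_jacobi vir_brC -vir_brN.
by apply: vir_br_ext => t; rewrite vir_brC opprK.
Qed.

End Bracket.

Section Ad.
Variable k : fieldType.

(* [ad F g w] is [F] evaluated at [[g, w]], [ad g] acting on words as a derivation. *)
Fixpoint ad (W : lmodType k) (F : seq letter -> W) (g : letter) (w : seq letter) : W :=
  match w with
  | [::] => 0
  | x :: w' => vir_br g x (fun z => F (z :: w')) + ad (fun u => F (x :: u)) g w'
  end.

Variable W : lmodType k.
Implicit Types (F G : seq letter -> W) (g x y : letter) (w : seq letter).

Lemma ad_ext_size F G g w :
  (forall u, size u = size w -> F u = G u) -> ad F g w = ad G g w.
Proof.
elim: w F G => [|x w IH] F G //= FG.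
rewrite (vir_br_ext _ _ (fun z => FG (z :: w) erefl)).
by congr (_ + _); apply: IH => u u_w; apply: FG; rewrite /= u_w.
Qed.

Lemma ad_ext F G g w : (forall u, F u = G u) -> ad F g w = ad G g w.
Proof. by move=> FG; apply: ad_ext_size => u _. Qed.

Lemma ad_klinear (U : lmodType k) (phi : U -> W) (F : seq letter -> U) g w :
  is_klinear phi -> ad (fun u => phi (F u)) g w = phi (ad F g w).
Proof.
move=> phi_lin; elim: w F => [|x w IH] F /=; first by rewrite (klinear0 phi_lin).
by rewrite vir_br_klinear // IH (klinearD phi_lin).
Qed.

Lemma adD F G g w : ad (fun u => F u + G u) g w = ad F g w + ad G g w.
Proof.
elim: w F G => [|x w IH] F G /=; first by rewrite addr0.
by rewrite vir_brD IH addrACA.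
Qed.

Lemma adZ a F g w : ad (fun u => a *: F u) g w = a *: ad F g w.
Proof. exact/ad_klinear/scale_klinear. Qed.

Lemma adN F g w : ad (fun u => - F u) g w = - ad F g w.
Proof. by rewrite -scaleN1r -adZ; apply: ad_ext => u; rewrite scaleN1r. Qed.

Lemma adB F G g w : ad (fun u => F u - G u) g w = ad F g w - ad G g w.
Proof. by rewrite adD adN. Qed.

Lemma ad0 g w : ad (fun=> 0 : W) g w = 0.
Proof. by elim: w => [|x w IH] //=; rewrite vir_br0 add0r. Qed.

Lemma ad_vir_br (F : letter -> seq letter -> W) x y g w :
  ad (fun u => vir_br x y (fun z => F z u)) g w = vir_br x y (fun z => ad (F z) g w).
Proof.
case: x => [n|]; case: y => [m|] /=; rewrite ?ad0 //.
by rewrite adD !adZ.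
Qed.

Lemma ad_cat F g a w :
  ad F g (a ++ w) = ad (fun u => F (u ++ w)) g a + ad (fun u => F (a ++ u)) g w.
Proof.
elim: a F => [|x a IH] F /=; first by rewrite add0r.
by rewrite IH addrA.
Qed.

Lemma ad_jacobi F x y w :
  ad (fun u => ad F y u) x w - ad (fun u => ad F x u) y w
  = vir_br y x (fun z => ad F z w).
Proof.
elim: w F => [|h w IH] F /=; first by rewrite subrr vir_br0.
rewrite !adD !ad_vir_br !vir_brD -IH -vir_br_leibniz.
set A1 := vir_br x h _; set A2 := vir_br y h (fun z => vir_br x z _).
set B1 := vir_br x h _; set B2 := vir_br y h _.
set E1 := ad _ x w; set E2 := ad _ y w.
by rewrite [B2 + E1]addrC addrACA [A2 + B2]addrC [B2 + A2 + _]addrACA [B2 + B1]addrC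
  addrKA opprD addrACA.
Qed.

Lemma ad_respects_bracket_at F g a b x y :
  (forall u b' x' y', size u = size a ->
     F (u ++ x' :: y' :: b') - F (u ++ y' :: x' :: b')
     = vir_br x' y' (fun z => F (u ++ z :: b'))) ->
  ad F g (a ++ x :: y :: b) - ad F g (a ++ y :: x :: b)
  = vir_br x y (fun z => ad F g (a ++ z :: b)).
Proof.
move=> F_br.
have ad_split z w : ad F g (a ++ z :: w) = ad (fun u => F (u ++ z :: w)) g a
    + (vir_br g z (fun t => F (a ++ t :: w)) + ad (fun u => F (a ++ z :: u)) g w).
  by rewrite ad_cat.
rewrite !ad_split /= (vir_br_ext x y (fun z => ad_split z b)) !vir_brD.
rewrite subrACA; congr (_ + _).
  rewrite -adB (ad_ext_size (G := fun u => vir_br x y (fun z => F (u ++ z :: b)))).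
    by rewrite ad_vir_br.
  by move=> u u_a; apply: F_br.
rewrite !addrA subrACA; congr (_ + _); last first.
  rewrite -adB (ad_ext (G := fun u => vir_br x y (fun z => F (a ++ z :: u)))).
    by rewrite ad_vir_br.
  by move=> u; apply: F_br.
rewrite [X in _ - X]addrC subrACA -!vir_brB.
rewrite (vir_br_ext g x (fun t => F_br a b t y erefl)).
rewrite (vir_br_ext g y (g := fun t => - vir_br t x (fun z => F (a ++ z :: b)))); last first.
  by move=> t; rewrite -F_br // opprB.
by rewrite vir_brN vir_br_jacobi.
Qed.

End Ad.

(* Bundled with its axioms so that the module structure of [coinduced E] below,
   which needs the linearity of the action, is canonical. *)
Record O_action (k : fieldType) (M : lmodType k) := OAction {
  O_act :> int -> M -> M;
  O_actP : is_O_action O_act }.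

Section Coinduced.
Variables (k : fieldType) (M : lmodType k) (E : O_action M).

Lemma O_act_klinear n : is_klinear (E n).
Proof. by case: (O_actP E). Qed.

Lemma O_actN n x : E (- n) x = - E n x.
Proof. by case: (O_actP E). Qed.

Lemma O_act0 x : E 0 x = 0.
Proof. by case: (O_actP E). Qed.

Definition respects_bracket (F : seq letter -> M) : Prop :=
  forall a b x y, F (a ++ x :: y :: b) - F (a ++ y :: x :: b)
                  = vir_br x y (fun z => F (a ++ z :: b)).

Definition O_equivariant (F : seq letter -> M) : Prop :=
  forall n w, F (Some n :: w) - F (Some (- n) :: w) = E n (F w).

(* Functions on words with both properties are the O-linear maps U(Vir) -> M,
   i.e. the elements of the Vir-module coinduced from M, on which Vir acts by
   right multiplication of the argument (see [coind_act]). *)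
Definition coinduced_pred : {pred seq letter -> M} :=
  fun F => `[< respects_bracket F /\ O_equivariant F >].

Lemma coinduced_submod_closed : GRing.submod_closed coinduced_pred.
Proof.
split.
  apply/asboolP; split=> [a b x y|n w] /=; rewrite subrr ?vir_br0 //.
  by rewrite (klinear0 (O_act_klinear n)).
move=> a F G /asboolP[F_br F_O] /asboolP[G_br G_O]; apply/asboolP.
split=> [p q x y|n w] /=; rewrite subrACA -scalerBr.
  by rewrite F_br G_br vir_brD vir_brZ.
by rewrite F_O G_O (O_act_klinear n).
Qed.

HB.instance Definition _ :=
  GRing.isSubmodClosed.Build k (seq letter -> M) coinduced_pred coinduced_submod_closed.

Record coinduced := Coinduced {
  coind_fun :> seq letter -> M;
  coind_funP : coind_fun \in coinduced_pred }.

HB.instance Definition _ := [isSub for coind_fun].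
HB.instance Definition _ := [Choice of coinduced by <:].
HB.instance Definition _ := [SubChoice_isSubLmodule of coinduced by <:].

Lemma coinduced_ext (F G : coinduced) : (forall u, F u = G u) -> F = G.
Proof. by move=> FG; apply/val_inj/funext. Qed.

Lemma coinducedP (F : coinduced) : respects_bracket F /\ O_equivariant F.
Proof. exact/asboolP/coind_funP. Qed.

Lemma rcons_coinduced g (F : coinduced) : (fun u => F (rcons u g)) \in coinduced_pred.
Proof.
have [F_br F_O] := coinducedP F; apply/asboolP; split=> [a b x y|n w] /=.
  by rewrite !rcons_cat F_br; apply: vir_br_ext => z; rewrite rcons_cat.
exact: F_O.
Qed.

Definition coind_act g (F : coinduced) : coinduced := Coinduced (rcons_coinduced g F).
Definition coindL n := coind_act (Some n).
Definition coindC := coind_act None.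

Lemma coind_vir_action : is_vir_action coindL coindC.
Proof.
have rcons2 (u : seq letter) x y : rcons (rcons u x) y = u ++ [:: x, y & [::]].
  by rewrite -!cats1 -catA.
split=> [n a F G|a F G|n m F|n F]; apply: coinduced_ext => u //=.
  by rewrite !fctE !rcons2 (coinducedP F).1 /= !cats1.
by apply/eqP; rewrite -subr_eq0 !rcons2 (coinducedP F).1.
Qed.

End Coinduced.

Arguments coindL {k M} E n.
Arguments coindC {k M} E.

(* The letters L_n (n >= 0) and C span b, which acts on a highest weight vector
   of weight (h,c) through the character [weight h c]. *)
Definition b_letter (x : letter) : bool := if x is Some n then 0 <= n else true.

Definition b_part (x : letter) : letter := if x is Some n then Some `|n| else None.

Definition weight (k : fieldType) (h c : k) (x : letter) : k :=
  if x is Some n then (if n == 0 then h else 0) else c.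

Lemma b_part_id x : b_letter x -> b_part x = x.
Proof. by case: x => [n|] //= n_ge0; rewrite ger0_norm. Qed.

Lemma b_letter_b_part x : b_letter (b_part x).
Proof. by case: x. Qed.

Section Weight.
Variables (k : fieldType) (h c : k).

Lemma vir_br_weight (W : lmodType k) (G : letter -> W) v x y :
  b_letter x -> b_letter y -> (forall z, b_letter z -> G z = weight h c z *: v) ->
  vir_br x y G = 0.
Proof.
case: x => [p|]; case: y => [q|] //= p_ge0 q_ge0 G_weight.
rewrite !G_weight //=; last exact: addr_ge0.
rewrite /vir_cocycle; have [pq0|pq_neq0] := eqVneq (p + q) 0.
  have [-> ->] : p = 0 /\ q = 0 by lia.
  by rewrite subrr eqxx !(oppr0, scale0r, mul0r, add0r).
have -> : (q == - p) = false by apply/eqP; lia.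
by rewrite !(scale0r, scaler0, add0r).
Qed.

Variables (M : lmodType k) (E : O_action M).
Implicit Types (F G : seq letter -> M) (g x : letter) (w : seq letter).

(* For n < 0, L_n is the sum of its b-part L_{-n} and its O-part L_n - L_{-n}. *)
Definition O_part g (v : M) : M := if g is Some n then (if n < 0 then E n v else 0) else 0.

Lemma O_part_b x v : b_letter x -> O_part x v = 0.
Proof. by case: x => [n|] //= n_ge0; rewrite ltNge n_ge0. Qed.

Lemma O_part_klinear g : is_klinear (O_part g).
Proof.
move=> a u v; case: g => [n|] /=; last by rewrite scaler0 addr0.
by case: ifP => _; rewrite ?(O_act_klinear E) ?scaler0 ?addr0.
Qed.

Lemma O_part_sub n v : O_part (Some n) v - O_part (Some (- n)) v = E n v.
Proof.
rewrite /= oppr_lt0; case: ltrgtP => [n_lt0|n_gt0|->].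
- by rewrite subr0.
- by rewrite sub0r O_actN opprK.
- by rewrite O_act0 subr0.
Qed.

Definition is_weight_fun F : Prop :=
  forall w x, b_letter x -> F (rcons w x) = weight h c x *: F w.

Lemma respects_bracket_cons F x w :
  respects_bracket F -> F (x :: w) = F (rcons w x) + ad F x w.
Proof.
elim: w F => [|y w IH] F F_br /=; first by rewrite addr0.
move/eqP: (F_br [::] w x y); rewrite subr_eq => /eqP /= ->.
have F_br' : respects_bracket (fun u => F (y :: u)) by move=> a b; apply: (F_br (y :: a)).
by rewrite (IH _ F_br') addrCA.
Qed.

Lemma O_equivariant_b_part F g w :
  O_equivariant E F -> F (g :: w) = F (b_part g :: w) + O_part g (F w).
Proof.
move=> F_O; case: g => [n|] /=; last by rewrite addr0.
have [n_lt0|n_ge0] := ltrP n 0; last by rewrite ger0_norm // addr0.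
have := F_O (- n) w; rewrite opprK O_actN => F_On.
by rewrite ltr0_norm // -[E n _]opprK -F_On opprB subrKC.
Qed.

Lemma weight_fun_cons F g w :
  respects_bracket F -> O_equivariant E F -> is_weight_fun F ->
  F (g :: w) = weight h c (b_part g) *: F w + ad F (b_part g) w + O_part g (F w).
Proof.
move=> F_br F_O F_wt.
by rewrite O_equivariant_b_part // respects_bracket_cons // F_wt // b_letter_b_part.
Qed.

Lemma weight_fun_unique F G :
  respects_bracket F -> O_equivariant E F -> is_weight_fun F ->
  respects_bracket G -> O_equivariant E G -> is_weight_fun G ->
  F [::] = G [::] -> forall w, F w = G w.
Proof.
move=> F_br F_O F_wt G_br G_O G_wt FG0 w.
elim: {w}(size w) {-2}w (erefl (size w)) => [|n IH] [|g w] //= [w_n].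
rewrite (weight_fun_cons g w F_br F_O F_wt) (weight_fun_cons g w G_br G_O G_wt) IH //.
by rewrite (ad_ext_size (G := G)) // => u u_n; apply: IH; rewrite u_n.
Qed.

End Weight.

Section HwFun.
Variables (k : fieldType) (M : lmodType k) (E : O_action M) (h c : k) (m : M).
Implicit Types (g x y z : letter) (w b : seq letter).
Local Notation wt := (weight h c).

(* Normal ordering: split the first letter into its b-part and its O-part, move
   the b-part to the right end of the word, where it acts by its weight, and
   recurse. The fuel [size w] makes the recursion structural. *)
Fixpoint hw_fun_fuel (n : nat) w : M :=
  match n, w with
  | n'.+1, g :: w' => wt (b_part g) *: hw_fun_fuel n' w'
                      + ad (hw_fun_fuel n') (b_part g) w' + O_part E g (hw_fun_fuel n' w')
  | _, _ => m
  end.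

Definition hw_fun w : M := hw_fun_fuel (size w) w.

Lemma hw_fun_cons g w :
  hw_fun (g :: w) = wt (b_part g) *: hw_fun w + ad hw_fun (b_part g) w + O_part E g (hw_fun w).
Proof. by rewrite /hw_fun /=; congr (_ + _ + _); apply: ad_ext_size => u ->. Qed.

Lemma hw_fun_cons_b x w : b_letter x -> hw_fun (x :: w) = wt x *: hw_fun w + ad hw_fun x w.
Proof. by move=> x_b; rewrite hw_fun_cons b_part_id // O_part_b // addr0. Qed.

Lemma hw_fun_O_equivariant : O_equivariant E hw_fun.
Proof.
move=> n w; rewrite !hw_fun_cons /= normrN [X in X - _]addrC addrKA.
exact: O_part_sub.
Qed.

Lemma hw_fun_weight : is_weight_fun h c hw_fun.
Proof.
move=> w; elim: {w}(size w) {-2}w (erefl (size w)) => [|n IH] [|g w] // => [_|[w_n]] x x_b.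
  by rewrite hw_fun_cons_b //= addr0.
have IHw u y : size u = n -> b_letter y -> hw_fun (u ++ [:: y]) = wt y *: hw_fun u.
  by move=> u_n y_b; rewrite cats1; apply: IH.
rewrite rcons_cons !hw_fun_cons -cats1 IHw // ad_cat.
rewrite (ad_ext_size (G := fun u => wt x *: hw_fun u)); last first.
  by move=> u u_n; rewrite IHw // u_n.
rewrite adZ /= addr0 (vir_br_weight (h := h) (c := c) (v := hw_fun w)) ?b_letter_b_part //;
  last by move=> z z_b; rewrite IHw.
by rewrite addr0 (klinearZ (O_part_klinear E g)) !scalerDr !scalerA mulrC.
Qed.

(* The defect vanishes for two b-letters by the Jacobi identity, and is
   transported to the other letters by O-equivariance in each slot. *)
Definition hw_fun_defect b x y : M :=
  hw_fun (x :: y :: b) - hw_fun (y :: x :: b) - vir_br x y (fun z => hw_fun (z :: b)).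

Lemma hw_fun_defectC b x y : hw_fun_defect b y x = - hw_fun_defect b x y.
Proof. by rewrite /hw_fun_defect (vir_brC x y) !opprB opprK addrC. Qed.

Lemma hw_fun_defect_b b x y : b_letter x -> b_letter y -> hw_fun_defect b x y = 0.
Proof.
move=> x_b y_b.
have hw_fun2 u v : b_letter u -> b_letter v -> hw_fun (u :: v :: b) =
    (wt u *: (wt v *: hw_fun b + ad hw_fun v b) + wt v *: ad hw_fun u b)
    + (vir_br u v (fun z => hw_fun (z :: b)) + ad (ad hw_fun v) u b).
  move=> u_b v_b; rewrite hw_fun_cons_b //=.
  rewrite (ad_ext (G := fun w => wt v *: hw_fun w + ad hw_fun v w)); last first.
    by move=> w; rewrite hw_fun_cons_b.
  rewrite adD adZ hw_fun_cons_b //.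
  by rewrite -[RHS]addrA; congr (_ + _); rewrite addrCA.
rewrite /hw_fun_defect (hw_fun2 x y) // (hw_fun2 y x) //.
have -> : wt x *: (wt y *: hw_fun b + ad hw_fun y b) + wt y *: ad hw_fun x b
        = wt y *: (wt x *: hw_fun b + ad hw_fun x b) + wt x *: ad hw_fun y b.
  by rewrite !scalerDr !scalerA mulrC addrAC.
rewrite subrACA subrr add0r subrACA ad_jacobi.
rewrite [vir_br y x _]vir_brC [vir_br y x _]vir_brC opprK addrAC addrK -vir_brB.
apply: (vir_br_weight (h := h) (c := c) (v := hw_fun b)) => // z z_b.
by rewrite hw_fun_cons_b // addrK.
Qed.

Lemma hw_fun_defect_Nl b n y :
  b_letter y -> hw_fun_defect b (Some n) y = hw_fun_defect b (Some (- n)) y.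
Proof.
move=> y_b; apply/eqP; rewrite -subr_eq0; apply/eqP.
set F := fun z => hw_fun (z :: b).
have E_lin := O_act_klinear E n.
have back : hw_fun (y :: Some n :: b) - hw_fun (y :: Some (- n) :: b)
    = E n (hw_fun (y :: b)) + (vir_br y (Some n) F - vir_br y (Some (- n)) F).
  rewrite !(hw_fun_cons_b (x := y)) //= subrACA -scalerBr hw_fun_O_equivariant subrACA -adB.
  rewrite (ad_ext (G := fun u => E n (hw_fun u))); last by move=> u; apply: hw_fun_O_equivariant.
  by rewrite ad_klinear // (klinearD E_lin) (klinearZ E_lin) addrA addrAC.
rewrite /hw_fun_defect subrACA3 hw_fun_O_equivariant back -/F.
rewrite (vir_brC y (Some n)) (vir_brC y (Some (- n))) -opprD opprK.
by rewrite opprD addNKr addNr.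
Qed.

Lemma hw_fun_defect_NN b n q :
  hw_fun_defect b (Some n) (Some q) - hw_fun_defect b (Some (- n)) (Some q)
  = hw_fun_defect b (Some n) (Some (- q)) - hw_fun_defect b (Some (- n)) (Some (- q)).
Proof.
apply/eqP; rewrite -subr_eq0; apply/eqP.
have [E_lin _ _ E_comm] := O_actP E.
set F := fun z => hw_fun (z :: b).
have front : (hw_fun (Some n :: Some q :: b) - hw_fun (Some (- n) :: Some q :: b))
    - (hw_fun (Some n :: Some (- q) :: b) - hw_fun (Some (- n) :: Some (- q) :: b))
    = E n (E q (hw_fun b)).
  by rewrite !hw_fun_O_equivariant -(klinearB (E_lin n)) hw_fun_O_equivariant.
have back : (hw_fun (Some q :: Some n :: b) - hw_fun (Some q :: Some (- n) :: b))
    - (hw_fun (Some (- q) :: Some n :: b) - hw_fun (Some (- q) :: Some (- n) :: b))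
    = E q (E n (hw_fun b)).
  by rewrite subrACA -opprD !hw_fun_O_equivariant -(klinearB (E_lin q)) hw_fun_O_equivariant.
have brackets : (vir_br (Some n) (Some q) F - vir_br (Some (- n)) (Some q) F)
    - (vir_br (Some n) (Some (- q)) F - vir_br (Some (- n)) (Some (- q)) F)
    = (n - q)%:~R *: E (n + q) (hw_fun b) - (n + q)%:~R *: E (n - q) (hw_fun b).
  rewrite opprB addrACA -opprD vir_br_addNN.
  have := vir_br_addNN (- n) q F; rewrite opprK => ->.
  have -> : - n + q = - (n - q) by rewrite opprB addrC.
  rewrite -opprD opprK intrN scaleNr opprK -[F _ - F (Some (n - q))]opprB scalerN.
  by rewrite /F !hw_fun_O_equivariant.
rewrite /hw_fun_defect [X in X - _]subrACA3 [X in _ - X]subrACA3 subrACA3.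
by rewrite front back brackets E_comm subrr.
Qed.

Lemma hw_fun_defect0 b x y : hw_fun_defect b x y = 0.
Proof.
have defect_r u v : b_letter v -> hw_fun_defect b u v = 0.
  move=> v_b; case: u => [p|]; last exact: hw_fun_defect_b.
  have [p_ge0|p_lt0] := leP 0 p; first exact: hw_fun_defect_b.
  by rewrite hw_fun_defect_Nl // hw_fun_defect_b //= oppr_ge0 ltW.
have defect_l u v : b_letter u -> hw_fun_defect b u v = 0.
  by move=> u_b; rewrite hw_fun_defectC defect_r // oppr0.
case y_b: (b_letter y); first exact: defect_r.
case x_b: (b_letter x); first exact: defect_l.
have neg_b r : ~~ (0 <= r) -> b_letter (Some (- r)).
  by rewrite -ltNge /= oppr_ge0 => /ltW.
case: x x_b => [p|] //= /negbT p_lt0; case: y y_b => [q|] //= /negbT q_lt0.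
have := hw_fun_defect_NN b (- p) (- q); rewrite !opprK.
rewrite hw_fun_defect_b ?neg_b // defect_r ?neg_b // defect_l ?neg_b // subrr sub0r.
by move/eqP; rewrite eq_sym oppr_eq0 => /eqP.
Qed.

Lemma hw_fun_respects_bracket : respects_bracket hw_fun.
Proof.
move=> a; elim: {a}(size a) {-2}a (erefl (size a)) => [|n IH] [|g a] // => [_|[a_n]] b x y.
  by apply/eqP; rewrite -subr_eq0; apply/eqP; apply: hw_fun_defect0.
rewrite !cat_cons !hw_fun_cons (vir_br_ext x y (fun z => hw_fun_cons g (a ++ z :: b))).
rewrite !vir_brD vir_brZ (vir_br_klinear _ _ _ (O_part_klinear E g)).
rewrite subrACA [X in X + _]subrACA -scalerBr -(klinearB (O_part_klinear E g)) !IH //.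
rewrite ad_respects_bracket_at // => u b' x' y' u_a.
by apply: IH; rewrite u_a.
Qed.

Lemma hw_fun_coinduced : hw_fun \in coinduced_pred E.
Proof.
by apply/asboolP; split; [apply: hw_fun_respects_bracket | apply: hw_fun_O_equivariant].
Qed.

Definition hw_coinduced : coinduced E := Coinduced hw_fun_coinduced.

Lemma hw_coinducedP : is_hw_vector (coindL E) (coindC E) h c hw_coinduced.
Proof.
split=> [||n n_gt0]; apply: coinduced_ext => u /=; rewrite hw_fun_weight //=; last exact: ltW.
by rewrite gt_eqF // scale0r.
Qed.

End HwFun.

Section VirModule.
Variables (k : fieldType) (V : lmodType k) (L : int -> V -> V) (C : V -> V).
Hypothesis LC : is_vir_action L C.

Definition vir_letter (g : letter) : V -> V := if g is Some n then L n else C.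

Definition word_act (u : seq letter) (x : V) : V := foldr vir_letter x u.

Lemma word_act_cat a u x : word_act (a ++ u) x = word_act a (word_act u x).
Proof. exact: foldr_cat. Qed.

Lemma word_act_rcons u g x : word_act (rcons u g) x = word_act u (vir_letter g x).
Proof. by rewrite -cats1 word_act_cat. Qed.

Lemma word_act_klinear u : is_klinear (word_act u).
Proof.
have [L_lin C_lin _ _] := LC.
elim: u => [|[n|] u IH] a x y //=; by rewrite IH ?L_lin ?C_lin.
Qed.

Lemma vir_letter_comm p q x :
  vir_letter p (vir_letter q x) - vir_letter q (vir_letter p x)
  = vir_br p q (fun z => vir_letter z x).
Proof.
have [_ _ LL CL] := LC.
by case: p => [n|]; case: q => [m|] /=; rewrite ?LL ?CL ?subrr.
Qed.

Lemma vir_letter_weight h c v x :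
  is_hw_vector L C h c v -> b_letter x -> vir_letter x v = weight h c x *: v.
Proof.
case=> L0 Cv Lpos; case: x => [n|] //= n_ge0.
by have [->|n_neq0] := eqVneq n 0; last by rewrite Lpos ?scale0r // lt_def n_neq0.
Qed.

Variables (M : lmodType k) (E : O_action M) (f : V -> M).
Hypotheses (f_lin : is_klinear f) (f_O : forall n x, f (restrict_O L n x) = E n (f x)).

Lemma lift_coinduced x : (fun u => f (word_act u x)) \in coinduced_pred E.
Proof.
have fw_lin a := klinear_comp f_lin (word_act_klinear a).
apply/asboolP; split=> [a b p q|n u] /=.
  rewrite !word_act_cat /= -(klinearB (fw_lin a)) vir_letter_comm.
  by rewrite -(vir_br_klinear _ _ _ (fw_lin a)); apply: vir_br_ext => z; rewrite word_act_cat.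
by rewrite -(klinearB f_lin); apply: f_O.
Qed.

Definition coind_lift x : coinduced E := Coinduced (lift_coinduced x).

Lemma coind_liftP :
  [/\ is_klinear coind_lift, forall n x, coind_lift (L n x) = coindL E n (coind_lift x)
    & forall x, coind_lift (C x) = coindC E (coind_lift x)].
Proof.
split=> [a x y|n x|x]; apply: coinduced_ext => u /=; rewrite ?word_act_rcons //.
by rewrite fctE (word_act_klinear u) f_lin.
Qed.

Lemma coind_lift_hw h c v :
  is_hw_vector L C h c v -> coind_lift v = hw_coinduced E h c (f v).
Proof.
move=> v_hw; apply: coinduced_ext; apply: (weight_fun_unique (h := h) (c := c) (E := E)) => //.
- exact: (coinducedP (coind_lift v)).1.
- exact: (coinducedP (coind_lift v)).2.
- move=> u x x_b /=; rewrite word_act_rcons (vir_letter_weight v_hw x_b).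
  by rewrite (klinearZ (word_act_klinear u)) (klinearZ f_lin).
- exact: hw_fun_respects_bracket.
- exact: hw_fun_O_equivariant.
- exact: hw_fun_weight.
Qed.

End VirModule.

Lemma coind_eval_nil (k : fieldType) (V : lmodType k) (L : int -> V -> V)
    (M : lmodType k) (E : O_action M) (F : V -> coinduced E) :
  is_klinear F -> (forall n x, F (L n x) = coindL E n (F x)) ->
  is_klinear (fun x => F x [::]) /\ forall n x, F (restrict_O L n x) [::] = E n (F x [::]).
Proof.
move=> F_lin FL; split=> [a x y|n x]; first by rewrite F_lin.
rewrite /restrict_O (klinearB F_lin) !FL /=.
exact: (coinducedP (F x)).2.
Qed.

Theorem proposition3p3 (k : fieldType) (chark : [pchar k] =i pred0) (h c : k)
    (V : lmodType k) (L : int -> V -> V) (C : V -> V) (v : V) :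
  is_verma h c L C v -> free_rank1_O (restrict_O L).
Proof.
case=> LC v_hw v_univ; exists v => M e m e_O; pose E := OAction e_O.
have [F [[F_lin Fv FL FC] F_uniq]] :=
  v_univ _ _ _ _ (coind_vir_action E) (hw_coinducedP E h c m).
have [F0_lin F0_O] := coind_eval_nil F_lin FL.
exists (fun x => F x [::]); split=> [|f [f_lin fv f_O]]; first by split; rewrite // Fv.
have f_E : forall n x, f (restrict_O L n x) = E n (f x) := f_O.
have [Phi_lin Phi_L Phi_C] := coind_liftP LC f_lin f_E.
have Phi_v : coind_lift LC f_lin f_E v = hw_coinduced E h c m.
  by rewrite (coind_lift_hw _ _ _ v_hw) fv.
rewrite (F_uniq _ (And4 Phi_lin Phi_v Phi_L Phi_C)).
by apply: funext => x.
Qed.
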